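(* Let $\Omega\subseteq\mathbb C^d$ be an irreducible bounded symmetric domain and $\mathbb K$ the group of linear biholomorphic automorphisms of $\Omega$. Let $\mathcal H_K(\Omega,\mathbb C^n)$ be a reproducing kernel Hilbert space of holomorphic functions on $\Omega$ with values in $\mathbb C^n$ and reproducing kernel $K:\Omega\times\Omega\to\mathcal M_n(\mathbb C)$. Assume that $\mathbb C^n\otimes\mathcal P$ (the $\mathbb C^n$-valued polynomials) is densely contained in $\mathcal H_K(\Omega,\mathbb C^n)$, that the $d$-tuple $\boldsymbol M$ of multiplication by the coordinate functions on $\mathcal H_K(\Omega,\mathbb C^n)$ is bounded, and that $K$ is normalized at $0$, i.e. $K(\boldsymbol z,0)=I_n$ for all $\boldsymbol z\in\Omega$. Then the following are equivalent: (1) $\boldsymbol M$ is $\mathbb K$-homogeneous, i.e. for each $k\in\mathbb K$ there is a unitary $\Gamma(k)$ on $\mathcal H_K(\Omega,\mathbb C^n)$ with $\Gamma(k)(k\cdot\boldsymbol M)\Gamma(k)^*=\boldsymbol M$; (2) $K$ is quasi-invariant under $\mathbb K$ with a multiplier $c:\mathbb K\times\Omega\to\mathcal U(n)$ such that $c(k,\boldsymbol z)$ is independent of $\boldsymbol z$; (3) there is a map $c:\mathbb K\to\mathcal U(n)$ such that for each $k\in\mathbb K$ the operator $(\Gamma(k)f)(\boldsymbol z):=c(k)f(k^{-1}\cdot\boldsymbol z)$ is unitary on $\mathcal H_K(\Omega,\mathbb C^n)$.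
   Context: For $k\in\mathbb K$, $k\cdot\boldsymbol z=(k_1(\boldsymbol z),\ldots,k_d(\boldsymbol z))$ with $k_j$ linear, and $k\cdot\boldsymbol M=(k_1(\boldsymbol M),\ldots,k_d(\boldsymbol M))$. $K$ is quasi-invariant under $\mathbb K$ with multiplier $c$ if $K(\boldsymbol z,\boldsymbol w)=c(k,\boldsymbol z)K(k^{-1}\cdot\boldsymbol z,k^{-1}\cdot\boldsymbol w)c(k,\boldsymbol w)^*$ for all $k\in\mathbb K$, $\boldsymbol z,\boldsymbol w\in\Omega$. *)

From HB Require Import structures.
From mathcomp Require Import all_boot all_order all_algebra.
From mathcomp Require Import complex.
From mathcomp Require Import all_classical all_reals all_analysis.
Set Implicit Arguments. Unset Strict Implicit. Unset Printing Implicit Defensive.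
Import Order.TTheory GRing.Theory Num.Theory.
Import numFieldNormedType.Exports.
Local Open Scope ring_scope.
Local Open Scope complex_scope.
Local Open Scope classical_set_scope.

Section Defs.
Variable R : realType.
Local Notation C := (R[i]).

(* C^d as a normed space over C (not over R) *)
Definition CnormV (d : nat) := [the normedModType C of 'rV[C]_d].

Definition holomorphic_on (d p q : nat)
  (U : set 'rV[C]_d) (f : 'rV[C]_d -> 'M[C]_(p, q)) : Prop :=
  forall z, U z -> differentiable f (z : CnormV d).

Definition domain (d : nat) (U : set 'rV[C]_d) : Prop :=
  open (U : set (CnormV d)) /\ connected (U : set (CnormV d)) /\ U !=set0.

Definition bounded_set (d : nat) (U : set 'rV[C]_d) : Prop :=
  exists r : C, forall z, U z -> `|(z : CnormV d)| <= r.

Definition biholomorphic (d m : nat) (U : set 'rV[C]_d) (V : set 'rV[C]_m)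
  (f : 'rV[C]_d -> 'rV[C]_m) : Prop :=
  exists g : 'rV[C]_m -> 'rV[C]_d,
    holomorphic_on U f /\ holomorphic_on V g /\
    (forall z, U z -> V (f z)) /\ (forall w, V w -> U (g w)) /\
    (forall z, U z -> g (f z) = z) /\ (forall w, V w -> f (g w) = w).

Definition bounded_symmetric_domain (d : nat) (U : set 'rV[C]_d) : Prop :=
  domain U /\ bounded_set U /\
  forall p, U p -> exists s : 'rV[C]_d -> 'rV[C]_d,
    biholomorphic U U s /\ (forall z, U z -> s (s z) = z) /\ s p = p /\
    exists e : C, 0 < e /\
      forall z, U z -> z != p -> `|(z - p : CnormV d)| < e -> s z != z.

Definition prod_set (d1 d2 : nat) (U1 : set 'rV[C]_d1) (U2 : set 'rV[C]_d2)
  : set 'rV[C]_(d1 + d2) :=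
  [set z | U1 (lsubmx z) /\ U2 (rsubmx z)].

Definition irreducible_BSD (d : nat) (U : set 'rV[C]_d) : Prop :=
  (0 < d)%N /\ bounded_symmetric_domain U /\
  ~ (exists (d1 d2 : nat) (U1 : set 'rV[C]_d1) (U2 : set 'rV[C]_d2)
        (f : 'rV[C]_d -> 'rV[C]_(d1 + d2)),
        (0 < d1)%N /\ (0 < d2)%N /\
        bounded_symmetric_domain U1 /\ bounded_symmetric_domain U2 /\
        biholomorphic U (prod_set U1 U2) f).

(* Harish-Chandra (standard circular) realization: 0 \in U and U is circular *)
Definition circular_at_0 (d : nat) (U : set 'rV[C]_d) : Prop :=
  U 0 /\ forall (t : C) z, `|t| = 1 -> U z -> U (t *: z).

(* the group K of linear biholomorphic automorphisms of U: z |-> z *m A *)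
Definition linAut (d : nat) (U : set 'rV[C]_d) (A : 'M[C]_d) : Prop :=
  A \in unitmx /\ (fun z => z *m A) @` U = U.

Definition adjM (p q : nat) (A : 'M[C]_(p, q)) : 'M[C]_(q, p) :=
  map_mx conjc (trmx A).

Definition unitary_mx (n : nat) (U : 'M[C]_n) : Prop := U *m adjM U = 1%:M.

Inductive scalar_polyfun (d : nat) : ('rV[C]_d -> C) -> Prop :=
| spf_const (c : C) : scalar_polyfun (fun _ => c)
| spf_coord (j : 'I_d) : scalar_polyfun (fun z => z 0 j)
| spf_add f g : scalar_polyfun f -> scalar_polyfun g ->
    scalar_polyfun (fun z => f z + g z)
| spf_mul f g : scalar_polyfun f -> scalar_polyfun g ->
    scalar_polyfun (fun z => f z * g z).

Definition vec_polyfun (d n : nat) (p : 'rV[C]_d -> 'cV[C]_n) : Prop :=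
  forall i : 'I_n, scalar_polyfun (fun z => p z i 0).

(* ---------- Hilbert spaces of C^n-valued functions on U ----------
   Elements are functions on all of C^d that vanish outside U; a function
   on U is identified with its extension by zero. *)
Definition ext0 (d n : nat) (U : set 'rV[C]_d) (f : 'rV[C]_d -> 'cV[C]_n)
  : 'rV[C]_d -> 'cV[C]_n :=
  fun z => if `[< U z >] then f z else 0.

Section Hilbert.
Variables (d n : nat).
Local Notation Fn := ('rV[C]_d -> 'cV[C]_n).
Variables (U : set 'rV[C]_d) (H : set Fn) (ip : Fn -> Fn -> C).

Definition hnorm (f : Fn) : C := sqrtC (ip f f).

Definition fsub (f g : Fn) : Fn := fun z => f z - g z.

(* H is a Hilbert space (with inner product ip, linear in the first slot)
   of holomorphic C^n-valued functions on U, with reproducing kernel K *)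
Definition is_RKHS (K : 'rV[C]_d -> 'rV[C]_d -> 'M[C]_n) : Prop :=
  [/\
      [/\ H (fun _ => 0),
         (forall f g, H f -> H g -> H (fun z => f z + g z)) &
         (forall (c : C) f, H f -> H (fun z => c *: f z))],
      (forall f, H f -> (forall z, ~ U z -> f z = 0) /\ holomorphic_on U f),
      [/\ forall f g h, H f -> H g -> H h -> ip (fun z => f z + g z) h = ip f h + ip g h,
          forall (c : C) f g, H f -> H g -> ip (fun z => c *: f z) g = c * ip f g,
          forall f g, H f -> H g -> ip g f = conjc (ip f g),
          forall f, H f -> 0 <= ip f f &
          forall f, H f -> ip f f = 0 -> f = (fun _ => 0)],
      (forall u : nat -> Fn, (forall k, H (u k)) ->
         (forall e : C, 0 < e -> exists N, forall k l, (N <= k)%N -> (N <= l)%N ->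
             hnorm (fsub (u k) (u l)) < e) ->
         exists g, H g /\ forall e : C, 0 < e -> exists N, forall k, (N <= k)%N ->
             hnorm (fsub (u k) g) < e) &
      (forall w (v : 'cV[C]_n), U w ->
         H (ext0 U (fun z => K z w *m v)) /\
         forall f, H f -> ip f (ext0 U (fun z => K z w *m v)) = (adjM v *m f w) 0 0)].

Definition poly_dense : Prop :=
  (forall p, vec_polyfun p -> H (ext0 U p)) /\
  forall f, H f -> forall e : C, 0 < e ->
    exists p, vec_polyfun p /\ hnorm (fsub f (ext0 U p)) < e.

Definition Mop (j : 'I_d) (f : Fn) : Fn := fun z => z 0 j *: f z.

Definition M_bounded : Prop :=
  forall j : 'I_d, (forall f, H f -> H (Mop j f)) /\
    exists B : C, forall f, H f -> hnorm (Mop j f) <= B * hnorm f.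

(* (k . M)_j = k_j(M) = \sum_i A i j M_i, where k . z = z *m A *)
Definition kM (A : 'M[C]_d) (j : 'I_d) (f : Fn) : Fn :=
  fun z => \sum_(i < d) A i j *: Mop i f z.

Definition unitary_op (T : Fn -> Fn) : Prop :=
  [/\ forall f, H f -> H (T f),
      forall f g, H f -> H g -> T (fun z => f z + g z) = (fun z => T f z + T g z),
      forall (c : C) f, H f -> T (fun z => c *: f z) = (fun z => c *: T f z),
      forall f g, H f -> H g -> ip (T f) (T g) = ip f g &
      forall g, H g -> exists f, H f /\ T f = g].

Definition K_homogeneous : Prop :=
  forall A, linAut U A ->
    exists (G Gstar : Fn -> Fn),
      unitary_op G /\
      (forall f, H f -> H (Gstar f)) /\
      (forall f g, H f -> H g -> ip (G f) g = ip f (Gstar g)) /\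
      forall (j : 'I_d) f, H f -> G (kM A j (Gstar f)) = Mop j f.

End Hilbert.

Definition quasi_invariant (d n : nat) (U : set 'rV[C]_d)
  (K : 'rV[C]_d -> 'rV[C]_d -> 'M[C]_n) (c : 'M[C]_d -> 'rV[C]_d -> 'M[C]_n) :=
  forall A, linAut U A -> forall z w, U z -> U w ->
    K z w = c A z *m K (z *m invmx A) (w *m invmx A) *m adjM (c A w).

End Defs.

(* (1) => (2): if Gamma(k) intertwines k.M with M, then Gamma(k)^* maps each
   kernel function K(., w) v to a joint eigenvector of M^* with eigenvalue
   k^-1 . w.  Since the polynomials are dense and K(., 0) = I, such an
   eigenvector g equals K(., k^-1 . w) g(0), which is linear in v; hence
   K(z, w) = Phi(z)^* K(k^-1 . z, k^-1 . w) Phi(w), and putting w = 0 shows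
   that Phi is a constant unitary.
   (2) => (3): quasi-invariance says Gamma(k) K(., w) v = K(., k . w) c(k) v,
   so Gamma(k) is isometric on the span of the kernel functions.  This span is
   dense (its orthogonal complement is zero and H is complete), and convergence
   in H implies pointwise convergence, so Gamma(k) is an isometry of H, onto
   since Gamma(k^-1) with multiplier c(k)^* inverts it.
   (3) => (2) evaluates the unitarity of Gamma(k) on kernel functions, and
   (3) => (1) is the identity Gamma(k) (k . M) Gamma(k)^* = M.
   Besides the reproducing kernel structure, only 0 \in Omega, the density of
   the polynomials, the normalization and M_j H <= H are used. *)
From HB Require Import structures.
From mathcomp Require Import all_boot all_order all_algebra.
From mathcomp Require Import complex.
From mathcomp Require Import all_classical all_reals all_analysis.
From mathcomp Require Import ring lra.
Set Implicit Arguments. Unset Strict Implicit. Unset Printing Implicit Defensive.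
Import Order.TTheory GRing.Theory Num.Theory.
Import numFieldNormedType.Exports.
Local Open Scope ring_scope.
Local Open Scope complex_scope.
Local Open Scope classical_set_scope.

Section ComplexModulus.
Variable R : realType.
Local Notation C := R[i].

Lemma ger0_RRe (x : C) : 0 <= x -> x = (complex.Re x)%:C.
Proof. by case: x => a b; rewrite lecE /= => /andP[/eqP -> _]. Qed.

Definition sqmod (a : C) : R := complex.Re a ^+ 2 + complex.Im a ^+ 2.

Lemma sqmodE (a : C) : a * conjc a = (sqmod a)%:C.
Proof. by rewrite add_Re2_Im2 sqr_normc. Qed.

Lemma sqmod_ge0 (a : C) : 0 <= sqmod a.
Proof. by rewrite addr_ge0 ?sqr_ge0. Qed.

Lemma sqmod_eq0 (a : C) : sqmod a = 0 -> a = 0.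
Proof.
case: a => a b; rewrite /sqmod /= => h.
have -> : a = 0 by nra.
by have -> : b = 0 by nra.
Qed.

Lemma sqr_Re_le_sqmod (a : C) : complex.Re a ^+ 2 <= sqmod a.
Proof. by rewrite lerDl sqr_ge0. Qed.

Lemma sqmod_real (t : R) : sqmod t%:C = t ^+ 2.
Proof. by rewrite /sqmod /= expr0n addr0. Qed.

Lemma sqmodRM (t : R) (a : C) : sqmod (t%:C * a) = t ^+ 2 * sqmod a.
Proof. by case: a => x y; rewrite /sqmod /=; ring. Qed.

Lemma sqmodD_le (a b : C) : sqmod (a + b) <= 2%:R * sqmod a + 2%:R * sqmod b.
Proof.
case: a b => a b [x y]; rewrite /sqmod /=.
by have := sqr_ge0 (a - x); have := sqr_ge0 (b - y); nra.
Qed.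

Lemma conjcRM (t : R) (a : C) : conjc (t%:C * a) = t%:C * conjc a.
Proof. by case: a => x y; apply/eqP; rewrite eq_complex /= !mul0r !subr0 !addr0 mulrN !eqxx. Qed.

End ComplexModulus.

Section Adjoint.
Variable R : realType.
Local Notation C := R[i].

Lemma adjME p q (A : 'M[C]_(p, q)) i j : adjM A i j = conjc (A j i).
Proof. by rewrite /adjM !mxE. Qed.

Lemma adjM_mul p q r (A : 'M[C]_(p, q)) (B : 'M[C]_(q, r)) :
  adjM (A *m B) = adjM B *m adjM A.
Proof.
apply/matrixP => i j; rewrite adjME !mxE rmorph_sum; apply: eq_bigr => k _.
by rewrite !adjME rmorphM mulrC.
Qed.

Lemma adjMK p q (A : 'M[C]_(p, q)) : adjM (adjM A) = A.
Proof. by apply/matrixP => i j; rewrite !adjME conjcK. Qed.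

Lemma form_conj n (a b : 'cV[C]_n) : conjc ((adjM a *m b) 0 0) = (adjM b *m a) 0 0.
Proof. by rewrite -adjME !adjM_mul adjMK. Qed.

Lemma formZ n (u w : 'cV[C]_n) (c : C) : (adjM u *m (c *: w)) 0 0 = c * (adjM u *m w) 0 0.
Proof. by rewrite -scalemxAr mxE. Qed.

Lemma form_mulmx n (U : 'M[C]_n) (u w : 'cV[C]_n) :
  (adjM u *m (U *m w)) 0 0 = (adjM (adjM U *m u) *m w) 0 0.
Proof. by rewrite adjM_mul adjMK mulmxA. Qed.

Lemma adjM_delta n (i : 'I_n) : adjM (delta_mx i 0 : 'cV[C]_n) = delta_mx 0 i.
Proof. by apply/matrixP => a b; rewrite adjME !mxE andbC conjc_nat. Qed.

Lemma eq_mx_forms n (A B : 'M[C]_n) :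
  (forall v v' : 'cV[C]_n, (adjM v' *m A *m v) 0 0 = (adjM v' *m B *m v) 0 0) ->
  A = B.
Proof.
move=> eqAB; apply/matrixP => i j.
have := eqAB (delta_mx j 0) (delta_mx i 0).
by rewrite adjM_delta -!rowE -!colE !mxE.
Qed.

Lemma eq_cV_forms n (x y : 'cV[C]_n) :
  (forall v : 'cV[C]_n, (adjM v *m x) 0 0 = (adjM v *m y) 0 0) -> x = y.
Proof.
move=> eqxy; apply/matrixP => i j; rewrite (ord1 j).
have := eqxy (delta_mx i 0).
by rewrite adjM_delta -!rowE !mxE.
Qed.

Lemma cV_sum_delta n (x : 'cV[C]_n) : x = \sum_(i < n) x i 0 *: delta_mx i 0.
Proof. by rewrite {1}(matrix_sum_delta x); apply: eq_bigr => i _; rewrite big_ord1. Qed.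

Lemma unitary_mxV n (U : 'M[C]_n) : unitary_mx U -> adjM U *m U = 1%:M.
Proof. exact: mulmx1C. Qed.

Lemma unitary_mx_adj n (U : 'M[C]_n) : unitary_mx U -> unitary_mx (adjM U).
Proof. by move=> /unitary_mxV; rewrite /unitary_mx adjMK. Qed.

End Adjoint.

Section CoordPolyfun.
Variables (R : realType) (d : nat).
Local Notation C := R[i].

(* Horner-type generation of the polynomial functions, convenient for induction. *)
Inductive coord_polyfun : ('rV[C]_d -> C) -> Prop :=
| cpf_const (c : C) : coord_polyfun (fun _ => c)
| cpf_add f g : coord_polyfun f -> coord_polyfun g -> coord_polyfun (fun z => f z + g z)
| cpf_coordM (j : 'I_d) f : coord_polyfun f -> coord_polyfun (fun z => z 0 j * f z).

Lemma eq_coord_polyfun f g : f =1 g -> coord_polyfun f -> coord_polyfun g.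
Proof. by move=> /funext ->. Qed.

Lemma coord_polyfunZ (c : C) f : coord_polyfun f -> coord_polyfun (fun z => c * f z).
Proof.
elim => [c'|f1 f2 _ h1 _ h2|j f1 _ h1].
- exact: cpf_const.
- by apply: eq_coord_polyfun (cpf_add h1 h2) => z; rewrite mulrDr.
- by apply: eq_coord_polyfun (cpf_coordM j h1) => z; rewrite mulrCA.
Qed.

Lemma coord_polyfunM f g :
  coord_polyfun f -> coord_polyfun g -> coord_polyfun (fun z => f z * g z).
Proof.
move=> pf pg; elim: pf => [c|f1 f2 _ h1 _ h2|j f1 _ h1].
- exact: coord_polyfunZ.
- by apply: eq_coord_polyfun (cpf_add h1 h2) => z; rewrite mulrDl.
- by apply: eq_coord_polyfun (cpf_coordM j h1) => z; rewrite mulrA.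
Qed.

Lemma scalar_coord_polyfun f : scalar_polyfun f -> coord_polyfun f.
Proof.
elim => [c|j|f1 f2 _ h1 _ h2|f1 f2 _ h1 _ h2].
- exact: cpf_const.
- by apply: eq_coord_polyfun (cpf_coordM j (cpf_const 1)) => z; rewrite mulr1.
- exact: cpf_add.
- exact: coord_polyfunM.
Qed.

Lemma coord_scalar_polyfun f : coord_polyfun f -> scalar_polyfun f.
Proof.
elim => [c|f1 f2 _ h1 _ h2|j f1 _ h1].
- exact: spf_const.
- exact: spf_add.
- by apply: spf_mul => //; apply: spf_coord.
Qed.

Lemma vec_polyfunZ n f (v : 'cV[C]_n) :
  coord_polyfun f -> vec_polyfun (fun z => f z *: v).
Proof.
move=> pf i; under [fun z => _]funext => z do rewrite mxE.
by apply: spf_mul; [apply: coord_scalar_polyfun | apply: spf_const].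
Qed.

End CoordPolyfun.

Section LinearAutomorphism.
Variables (R : realType) (d : nat) (Om : set 'rV[R[i]]_d) (A : 'M[R[i]]_d).
Hypothesis linA : linAut Om A.

Lemma linAut_unit : A \in unitmx.
Proof. by case: linA. Qed.

Lemma linAut_mulmx z : Om z -> Om (z *m A).
Proof. by case: linA => _ OmA Omz; rewrite -OmA; exists z. Qed.

Lemma linAut_mulmx_inv z : Om z -> Om (z *m invmx A).
Proof. by case: linA => unitA OmA; rewrite -{1}OmA => -[y Omy <-]; rewrite mulmxK. Qed.

Lemma linAut_notin_inv z : ~ Om z -> ~ Om (z *m invmx A).
Proof. by move=> Omz /linAut_mulmx; rewrite mulmxKV ?linAut_unit. Qed.

Lemma linAut_inv : linAut Om (invmx A).
Proof.
split; first by rewrite unitmx_inv linAut_unit.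
apply/seteqP; split => [_ [z Omz <-]|z Omz]; first exact: linAut_mulmx_inv.
by exists (z *m A); rewrite ?mulmxK ?linAut_unit //; apply: linAut_mulmx.
Qed.

End LinearAutomorphism.

Section ExtensionByZero.
Variables (R : realType) (d n : nat) (U : set 'rV[R[i]]_d).
Implicit Types f g : 'rV[R[i]]_d -> 'cV[R[i]]_n.

Lemma ext0_in f z : U z -> ext0 U f z = f z.
Proof. by move=> Uz; rewrite /ext0 asboolT. Qed.

Lemma ext0_out f z : ~ U z -> ext0 U f z = 0.
Proof. by move=> Uz; rewrite /ext0 asboolF. Qed.

Lemma ext0D f g : ext0 U (fun z => f z + g z) = (fun z => ext0 U f z + ext0 U g z).
Proof.
apply/funext => z; have [Uz|Uz] := pselect (U z).
  by rewrite !ext0_in.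
by rewrite !ext0_out // addr0.
Qed.

Lemma ext0_cst0 : ext0 U (fun _ => 0 : 'cV[R[i]]_n) = (fun _ => 0).
Proof. by apply/funext => z; rewrite /ext0; case: asboolP. Qed.

End ExtensionByZero.

Definition inv_succ (R : realType) (k : nat) : R := k.+1%:R^-1.

Lemma inv_succ_gt0 (R : realType) (k : nat) : 0 < inv_succ R k.
Proof. by rewrite invr_gt0 ltr0n. Qed.

Lemma inv_succ_lt (R : realType) (e : R) :
  0 < e -> exists N0, forall k, (N0 <= k)%N -> inv_succ R k < e.
Proof.
move=> e_gt0; exists (Num.truncn e^-1) => k le_N0k.
rewrite invf_plt ?posrE ?ltr0n //.
by apply: lt_le_trans (truncnS_gt _) _; rewrite ler_nat ltnS.
Qed.

Lemma le_of_forall_small (R : realType) (a b c : R) :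
  0 <= c -> (forall t, 0 < t -> t <= 1 -> a <= b + t * c) -> a <= b.
Proof.
move=> c_ge0 small; apply/ler_addgt0Pr => e e_gt0.
pose t := Num.min 1 (e / (c + 1)).
have t_gt0 : 0 < t by rewrite lt_min ltr01 divr_gt0 //; lra.
have t_le1 : t <= 1 by rewrite ge_min lexx.
have tc_le : t * (c + 1) <= e by rewrite -ler_pdivlMr ?ge_min ?lexx ?orbT //; lra.
by apply: le_trans (small t t_gt0 t_le1) _; rewrite lerD2l; nra.
Qed.

(** * Hilbert spaces of functions *)

Section FunctionHilbertSpace.
Variables (R : realType) (d n : nat).
Local Notation C := R[i].
Local Notation Fn := ('rV[C]_d -> 'cV[C]_n).

Definition lin_closed (S : set Fn) : Prop :=
  [/\ S (fun _ => 0), (forall f g, S f -> S g -> S (fun z => f z + g z)) &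
      (forall (c : C) f, S f -> S (fun z => c *: f z))].

Definition inner_product_on (H : set Fn) (ip : Fn -> Fn -> C) : Prop :=
  [/\ forall f g h, H f -> H g -> H h -> ip (fun z => f z + g z) h = ip f h + ip g h,
      forall (c : C) f g, H f -> H g -> ip (fun z => c *: f z) g = c * ip f g,
      forall f g, H f -> H g -> ip g f = conjc (ip f g),
      forall f, H f -> 0 <= ip f f &
      forall f, H f -> ip f f = 0 -> f = (fun _ => 0)].

Definition complete_for (H : set Fn) (ip : Fn -> Fn -> C) : Prop :=
  forall u : nat -> Fn, (forall k, H (u k)) ->
    (forall e : C, 0 < e -> exists N, forall k l, (N <= k)%N -> (N <= l)%N ->
       hnorm ip (fsub (u k) (u l)) < e) ->
    exists g, H g /\ forall e : C, 0 < e -> exists N, forall k, (N <= k)%N ->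
       hnorm ip (fsub (u k) g) < e.

Variables (H : set Fn) (ip : Fn -> Fn -> C).
Hypotheses (H_lin : lin_closed H) (ip_inner : inner_product_on H ip).

Lemma mem0 : H (fun _ => 0). Proof. by case: H_lin. Qed.

Local Hint Resolve mem0 : core.

Lemma memD f g : H f -> H g -> H (fun z => f z + g z).
Proof. by case: H_lin => _ memD _; apply: memD. Qed.

Lemma memZ (c : C) f : H f -> H (fun z => c *: f z).
Proof. by case: H_lin => _ _; apply. Qed.

Lemma fsubE (f g : Fn) : fsub f g = (fun z => f z + (-1) *: g z).
Proof. by apply/funext => z; rewrite /fsub scaleN1r. Qed.

Lemma fsub_eq0 (f g : Fn) : fsub f g = (fun _ => 0) -> f = g.
Proof. by move=> fg0; apply/funext => z; apply/subr0_eq; exact: (congr1 (fun F => F z) fg0). Qed.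

Lemma memB f g : H f -> H g -> H (fsub f g).
Proof. by move=> Hf Hg; rewrite fsubE; apply: memD => //; apply: memZ. Qed.

Lemma ipDl f g h : H f -> H g -> H h -> ip (fun z => f z + g z) h = ip f h + ip g h.
Proof. by case: ip_inner => ipDl *; apply: ipDl. Qed.

Lemma ipZl (c : C) f g : H f -> H g -> ip (fun z => c *: f z) g = c * ip f g.
Proof. by case: ip_inner => _ ipZl *; apply: ipZl. Qed.

Lemma ipC f g : H f -> H g -> ip g f = conjc (ip f g).
Proof. by case: ip_inner => _ _ ipC *; apply: ipC. Qed.

Lemma ip_ge0 f : H f -> 0 <= ip f f.
Proof. by case: ip_inner => _ _ _ ip_ge0 *; apply: ip_ge0. Qed.

Lemma ip_eq0 f : H f -> ip f f = 0 -> f = (fun _ => 0).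
Proof. by case: ip_inner => _ _ _ _; apply. Qed.

Lemma ipDr f g h : H f -> H g -> H h -> ip h (fun z => f z + g z) = ip h f + ip h g.
Proof.
by move=> Hf Hg Hh; rewrite (ipC (memD Hf Hg)) // ipDl // rmorphD (ipC Hf) // (ipC Hg).
Qed.

Lemma ipZr (c : C) f g : H f -> H g -> ip g (fun z => c *: f z) = conjc c * ip g f.
Proof. by move=> Hf Hg; rewrite (ipC (memZ c Hf)) // ipZl // rmorphM (ipC Hf). Qed.

Lemma ip0l f : H f -> ip (fun _ => 0) f = 0.
Proof.
move=> Hf; have -> : (fun _ => 0) = (fun z : 'rV[C]_d => 0 *: (0 : 'cV[C]_n)).
  by apply/funext => z; rewrite scale0r.
by rewrite ipZl ?mul0r.
Qed.

Lemma ip0r f : H f -> ip f (fun _ => 0) = 0.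
Proof. by move=> Hf; rewrite ipC ?ip0l ?conjc0. Qed.

Lemma ipBl f g h : H f -> H g -> H h -> ip (fsub f g) h = ip f h - ip g h.
Proof. by move=> Hf Hg Hh; rewrite fsubE ipDl ?ipZl ?mulN1r //; apply: memZ. Qed.

Lemma ipBr f g h : H f -> H g -> H h -> ip h (fsub f g) = ip h f - ip h g.
Proof. by move=> Hf Hg Hh; rewrite (ipC (memB Hf Hg)) // ipBl // rmorphB (ipC Hf) // (ipC Hg). Qed.

Lemma ip_inj_r a b : H a -> H b -> (forall x, H x -> ip x a = ip x b) -> a = b.
Proof.
move=> Ha Hb eq_ab; have Hab := memB Ha Hb.
by apply/fsub_eq0/ip_eq0; rewrite // ipBr // !eq_ab ?subrr.
Qed.

Definition sqnorm f : R := complex.Re (ip f f).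

Lemma ip_sqnorm f : H f -> ip f f = (sqnorm f)%:C.
Proof. by move=> Hf; apply/ger0_RRe/ip_ge0. Qed.

Lemma sqnorm_ge0 f : H f -> 0 <= sqnorm f.
Proof. by move=> Hf; rewrite -lecR -ip_sqnorm ?ip_ge0. Qed.

Lemma sqnorm_eq0 f : H f -> sqnorm f = 0 -> f = (fun _ => 0).
Proof. by move=> Hf N0; apply: ip_eq0; rewrite // ip_sqnorm // N0. Qed.

Lemma cauchy_schwarz f g : H f -> H g -> sqmod (ip f g) <= sqnorm f * sqnorm g.
Proof.
move=> Hf Hg; have [Ng0|Ng_neq0] := eqVneq (sqnorm g) 0.
  by rewrite Ng0 mulr0 (sqnorm_eq0 Hg Ng0) ip0r // /sqmod /= expr0n addr0.
have Ng_gt0 : 0 < sqnorm g by rewrite lt0r Ng_neq0 sqnorm_ge0.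
set a := ip f g; set t := (sqnorm g)^-1.
(* [0 <= |f - (<f, g> / |g|^2) g|^2] *)
have Hag := memZ (t%:C * a) Hg.
have Hh := memB Hf Hag.
have := ip_ge0 Hh.
rewrite ipBl ?ipBr ?ipZl ?ipZr // (ipC Hf Hg) -/a !ip_sqnorm // conjcRM.
have -> : (sqnorm f)%:C - t%:C * conjc a * a
          - (t%:C * a * conjc a - t%:C * a * (t%:C * conjc a * (sqnorm g)%:C))
        = (sqnorm f)%:C - 2%:R * t%:C * (a * conjc a)
          + t%:C * t%:C * (sqnorm g)%:C * (a * conjc a) by ring.
rewrite sqmodE; move: (sqmod a) => s.
have -> : (sqnorm f)%:C - 2%:R * t%:C * s%:C + t%:C * t%:C * (sqnorm g)%:C * s%:C
        = (sqnorm f - 2%:R * t * s + t * t * sqnorm g * s)%:C.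
  by rewrite rmorphD rmorphB !rmorphM rmorph_nat.
rewrite lecR.
have -> : t * t * sqnorm g = t by rewrite /t -mulrA mulVf ?mulr1.
move=> le0; have : s * t <= sqnorm f by nra.
by rewrite ler_pdivrMr.
Qed.

Lemma sqnormD f g : H f -> H g ->
  sqnorm (fun z => f z + g z) = sqnorm f + sqnorm g + 2%:R * complex.Re (ip f g).
Proof.
move=> Hf Hg; have Hfg := memD Hf Hg.
rewrite /sqnorm ipDl // !ipDr // (ipC Hf Hg).
by case: (ip f f) (ip g g) (ip f g) => ? ? [? ?] [? ?] /=; ring.
Qed.

Lemma sqnormB f g : H f -> H g ->
  sqnorm (fsub f g) = sqnorm f + sqnorm g - 2%:R * complex.Re (ip f g).
Proof.
move=> Hf Hg; have Hfg := memB Hf Hg.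
rewrite /sqnorm ipBl // !ipBr // (ipC Hf Hg).
by case: (ip f f) (ip g g) (ip f g) => ? ? [? ?] [? ?] /=; ring.
Qed.

Lemma sqnormZ (c : C) f : H f -> sqnorm (fun z => c *: f z) = sqmod c * sqnorm f.
Proof.
move=> Hf; have Hcf := memZ c Hf.
rewrite /sqnorm ipZl ?ipZr //.
by rewrite mulrA sqmodE ip_sqnorm // -rmorphM.
Qed.

Lemma sqnorm_subC f g : H f -> H g -> sqnorm (fsub f g) = sqnorm (fsub g f).
Proof. by move=> Hf Hg; rewrite !sqnormB // (ipC Hf Hg); case: (ip f g) => ? ? /=; ring. Qed.

Lemma parallelogram f g : H f -> H g ->
  sqnorm (fun z => f z + g z) + sqnorm (fsub f g) = 2%:R * sqnorm f + 2%:R * sqnorm g.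
Proof. by move=> Hf Hg; rewrite sqnormD // sqnormB //; ring. Qed.

Lemma Re_ip_le f g (eta : R) : H f -> H g -> 0 < eta ->
  2%:R * complex.Re (ip f g) <= eta * sqnorm f + eta^-1 * sqnorm g.
Proof.
move=> Hf Hg eta_gt0.
have CS := cauchy_schwarz Hf Hg; have Re_le := sqr_Re_le_sqmod (ip f g).
have Nf := sqnorm_ge0 Hf; have Ng := sqnorm_ge0 Hg.
set r := complex.Re (ip f g) in Re_le *.
set a := eta * sqnorm f; set b := eta^-1 * sqnorm g.
have a_ge0 : 0 <= a by rewrite /a mulr_ge0 // ltW.
have b_ge0 : 0 <= b by rewrite /b mulr_ge0 // invr_ge0 ltW.
have ab : a * b = sqnorm f * sqnorm g by rewrite /a /b mulrACA mulfV ?gt_eqF ?mul1r.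
have r2_le : r ^+ 2 <= a * b by rewrite ab; apply: le_trans CS.
have am_gm : 4%:R * r ^+ 2 <= (a + b) ^+ 2 by have := sqr_ge0 (a - b); nra.
rewrite leNgt; apply/negP => lt_ab.
have : 0 < (2%:R * r - (a + b)) * (2%:R * r + (a + b)) by apply: mulr_gt0; lra.
nra.
Qed.

Lemma sqnormD_le f g (eta : R) : H f -> H g -> 0 < eta ->
  sqnorm (fun z => f z + g z) <= (1 + eta) * sqnorm f + (1 + eta^-1) * sqnorm g.
Proof. by move=> Hf Hg eta_gt0; rewrite sqnormD //; have := Re_ip_le Hf Hg eta_gt0; lra. Qed.

Lemma sqnorm_sub_le f g h (eta : R) : H f -> H g -> H h -> 0 < eta ->
  sqnorm (fsub f h) <= (1 + eta) * sqnorm (fsub f g) + (1 + eta^-1) * sqnorm (fsub g h).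
Proof.
move=> Hf Hg Hh eta_gt0.
have -> : fsub f h = (fun z => fsub f g z + fsub g h z).
  by apply/funext => z; rewrite /fsub addrA subrK.
by apply: sqnormD_le => //; apply: memB.
Qed.

Lemma sqnorm_perturb f g h (t : R) : H f -> H g -> H h -> 0 < t -> t <= 1 ->
  sqnorm (fsub g h) <= t ^+ 2 ->
  sqnorm (fsub f h) <= sqnorm (fsub f g) + t * (sqnorm (fsub f g) + 2%:R).
Proof.
move=> Hf Hg Hh t_gt0 t_le1 gh_le.
have := sqnorm_sub_le Hf Hg Hh t_gt0.
have : (1 + t^-1) * sqnorm (fsub g h) <= t ^+ 2 + t.
  apply: le_trans (_ : (1 + t^-1) * t ^+ 2 <= _).
    by rewrite ler_pM2l // ltr_wpDr ?invr_ge0 ?ltW.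
  by rewrite mulrDl mul1r expr2 mulKf ?gt_eqF.
have := sqnorm_ge0 (memB Hf Hg); nra.
Qed.

Lemma hnorm_ltE f (e : C) : H f -> 0 < e ->
  (hnorm ip f < e) = (sqnorm f < complex.Re e ^+ 2).
Proof.
move=> Hf e_gt0; have e_ge0 := ltW e_gt0.
have n_ge0 : 0 <= hnorm ip f by rewrite sqrtC_ge0 ip_ge0.
rewrite -(ltr_pXn2r (n := 2)) ?nnegrE //.
by rewrite /hnorm sqrtCK ip_sqnorm // {1}(ger0_RRe e_ge0) -rmorphXn ltcR.
Qed.

Definition null_seq (u : nat -> R) :=
  forall e : R, 0 < e -> exists N0, forall k, (N0 <= k)%N -> u k < e.

Definition dense_in (D : set Fn) :=
  forall f, H f -> forall e : R, 0 < e -> exists p, D p /\ sqnorm (fsub f p) < e.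

Lemma orthogonal_dense_eq0 (D : set Fn) : D `<=` H -> dense_in D ->
  forall h, H h -> (forall p, D p -> ip p h = 0) -> h = (fun _ => 0).
Proof.
move=> DH D_dense h Hh h_orth.
have [Nh0|Nh_neq0] := eqVneq (sqnorm h) 0; first exact: sqnorm_eq0.
have Nh_gt0 : 0 < sqnorm h by rewrite lt0r Nh_neq0 sqnorm_ge0.
have [p [Dp lt_hp]] := D_dense h Hh (sqnorm h / 2%:R) (divr_gt0 Nh_gt0 (ltr0n _ 2)).
(* [<h - p, h> = |h|^2] forces [|h - p| >= |h|] *)
have Hp := DH p Dp; have Hhp := memB Hh Hp.
have := cauchy_schwarz Hhp Hh.
rewrite ipBl // (h_orth p Dp) subr0 ip_sqnorm // sqmod_real.
move=> CS; exfalso; have := sqnorm_ge0 Hhp; nra.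
Qed.

Lemma sqnorm_sub_lim_ge f g (s : nat -> Fn) (Y : R) : H f -> H g -> (forall k, H (s k)) ->
  null_seq (fun k => sqnorm (fsub (s k) g)) ->
  (forall k, Y <= sqnorm (fsub f (s k))) -> Y <= sqnorm (fsub f g).
Proof.
move=> Hf Hg Hs s_cvg Y_le.
have Nfg_ge0 := sqnorm_ge0 (memB Hf Hg).
apply: (@le_of_forall_small _ _ _ (sqnorm (fsub f g) + 2%:R)); first lra.
move=> t t_gt0 t_le1; have [k /(_ k (leqnn k)) sk_lt] := s_cvg _ (exprn_gt0 2 t_gt0).
apply: le_trans (Y_le k) (sqnorm_perturb Hf Hg (Hs k) t_gt0 t_le1 _).
by rewrite sqnorm_subC // ltW.
Qed.

Lemma sqnorm_sub_lim_le f g (s : nat -> Fn) (Y : R) : H f -> H g -> (forall k, H (s k)) ->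
  null_seq (fun k => sqnorm (fsub (s k) g)) ->
  (forall k, sqnorm (fsub f (s k)) < Y + inv_succ R k) -> sqnorm (fsub f g) <= Y.
Proof.
move=> Hf Hg Hs s_cvg lt_Y.
have Y_gt : -1 < Y.
  have := sqnorm_ge0 (memB Hf (Hs 0%N)); have := lt_Y 0%N.
  by rewrite /inv_succ invr1; lra.
apply: (@le_of_forall_small _ _ _ (Y + 4%:R)); first lra.
move=> t t_gt0 t_le1.
have [N1 N1_lt] := s_cvg _ (exprn_gt0 2 t_gt0).
have [N2 N2_lt] := inv_succ_lt t_gt0.
set k := maxn N1 N2.
have sk_lt := N1_lt k (leq_maxl _ _); have ik_lt := N2_lt k (leq_maxr _ _).
have := sqnorm_perturb Hf (Hs k) Hg t_gt0 t_le1 (ltW sk_lt).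
have := lt_Y k; have := sqnorm_ge0 (memB Hf (Hs k)); nra.
Qed.

Lemma ip_lim a b k1 k2 (x y : nat -> Fn) : H a -> H b -> H k1 -> H k2 ->
  (forall k, H (x k)) -> (forall k, H (y k)) ->
  null_seq (fun k => sqnorm (fsub (x k) a)) -> null_seq (fun k => sqnorm (fsub (y k) b)) ->
  (forall k, ip (x k) k1 = ip (y k) k2) -> ip a k1 = ip b k2.
Proof.
move=> Ha Hb Hk1 Hk2 Hx Hy x_cvg y_cvg eq_xy.
apply/eqP; rewrite -subr_eq0; apply/eqP/sqmod_eq0/eqP.
rewrite eq_le sqmod_ge0 andbT; apply/ler_addgt0Pr => e e_gt0; rewrite add0r.
set M1 := sqnorm k1 + 1; set M2 := sqnorm k2 + 1.
have N1 := sqnorm_ge0 Hk1; have N2 := sqnorm_ge0 Hk2.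
have M1_gt0 : 0 < M1 by rewrite /M1; lra.
have M2_gt0 : 0 < M2 by rewrite /M2; lra.
have [K1 xK] := x_cvg (e / (4%:R * M1)) (divr_gt0 e_gt0 (mulr_gt0 (ltr0n _ 4) M1_gt0)).
have [K2 yK] := y_cvg (e / (4%:R * M2)) (divr_gt0 e_gt0 (mulr_gt0 (ltr0n _ 4) M2_gt0)).
set k := maxn K1 K2.
have {xK} := xK k (leq_maxl _ _); have {yK} := yK k (leq_maxr _ _).
rewrite !ltr_pdivlMr ?mulr_gt0 ?ltr0n // => yk_lt xk_lt.
have -> : ip a k1 - ip b k2 = ip (fsub a (x k)) k1 + ip (fsub (y k) b) k2.
  by rewrite !ipBl // eq_xy; ring.
apply: le_trans (sqmodD_le _ _) _.
have CS1 := cauchy_schwarz (memB Ha (Hx k)) Hk1.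
have CS2 := cauchy_schwarz (memB (Hy k) Hb) Hk2.
rewrite sqnorm_subC // in CS1.
have := sqnorm_ge0 (memB (Hx k) Ha); have := sqnorm_ge0 (memB (Hy k) Hb).
rewrite /M1 /M2 in xk_lt yk_lt; nra.
Qed.

Definition subspace (S : set Fn) := lin_closed S /\ S `<=` H.

Lemma minimizer_orthogonal (S : set Fn) y : subspace S -> H y ->
  (forall w, S w -> sqnorm y <= sqnorm (fsub y w)) -> forall w, S w -> ip y w = 0.
Proof.
move=> [[_ _ SZ] SH] Hy y_min w Sw; have Hw := SH w Sw.
set b := ip y w; set t := (sqnorm w + 1)^-1.
have Nw := sqnorm_ge0 Hw.
have t_gt0 : 0 < t by rewrite invr_gt0; lra.
have tNw_lt1 : t * sqnorm w < 1 by rewrite mulrC ltr_pdivrMr; lra.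
(* test the minimality against [y - t <y, w> w] for a small [t] *)
have := y_min _ (SZ (t%:C * b) w Sw).
rewrite sqnormB //; last exact: memZ.
rewrite sqnormZ // ipZr // -/b conjcRM sqmodRM.
have -> : complex.Re (t%:C * conjc b * b) = t * sqmod b.
  by case: b => b1 b2; rewrite /sqmod /=; ring.
move=> le_tb; apply/sqmod_eq0/eqP; rewrite eq_le sqmod_ge0 andbT.
have : 2%:R * (t * sqmod b) <= t ^+ 2 * sqmod b * sqnorm w by lra.
have := sqmod_ge0 b => s_ge0 le2.
have : t * sqmod b <= 0 by nra.
by rewrite pmulr_rle0.
Qed.

Lemma exists_minimizing_seq (S : set Fn) f : subspace S -> H f ->
  exists del (s : nat -> Fn), [/\ 0 <= del, forall w, S w -> del <= sqnorm (fsub f w),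
    forall k, S (s k) & forall k, sqnorm (fsub f (s k)) < del + inv_succ R k].
Proof.
move=> [[S0 _ _] SH] Hf.
pose E := [set r | exists2 w, S w & r = sqnorm (fsub f w)].
have E_ge0 r : E r -> 0 <= r by move=> [w Sw ->]; apply/sqnorm_ge0/memB/SH.
have E_inf : has_inf E.
  by split; [exists (sqnorm (fsub f (fun _ => 0))), (fun _ => 0) | exists 0 => r /E_ge0].
have s_ex k : exists w, S w /\ sqnorm (fsub f w) < inf E + inv_succ R k.
  by have [_ [w Sw ->] lt_w] := inf_adherent (inv_succ_gt0 R k) E_inf; exists w.
have [s s_min] := choice s_ex.
exists (inf E), s; split; first by apply: lb_le_inf => //; case: E_inf.
- by move=> w Sw; apply: (ge_inf E_inf.2); exists w.
- by move=> k; case: (s_min k).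
- by move=> k; case: (s_min k).
Qed.

Lemma minimizing_seq_cauchy (S : set Fn) f (del : R) (s : nat -> Fn) :
  subspace S -> H f -> (forall w, S w -> del <= sqnorm (fsub f w)) ->
  (forall k, S (s k)) -> (forall k, sqnorm (fsub f (s k)) < del + inv_succ R k) ->
  forall k l, sqnorm (fsub (s k) (s l)) <= 2%:R * inv_succ R k + 2%:R * inv_succ R l.
Proof.
move=> [[_ SD SZ] SH] Hf del_le Ss s_min k l.
have Hsk := SH _ (Ss k); have Hsl := SH _ (Ss l).
pose m z := 2%:R^-1 *: (s k z + s l z).
have Sm : S m by apply/SZ/SD.
(* the parallelogram law for [f - s l] and [f - s k], whose half-sum is [f - m] *)
have := parallelogram (memB Hf Hsl) (memB Hf Hsk).
have -> : (fun z => fsub f (s l) z + fsub f (s k) z) = (fun z => 2%:R *: fsub f m z).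
  apply/funext => z; rewrite /m /fsub scalerBr scalerA mulfV ?pnatr_eq0 // scale1r.
  by rewrite scaler_nat mulr2n addrACA opprD (addrC (- s l z)).
have -> : fsub (fsub f (s l)) (fsub f (s k)) = fsub (s k) (s l).
  by apply/funext => z; rewrite /fsub opprB addrC addrA subrK.
rewrite sqnormZ; last exact: memB (SH _ Sm).
rewrite -(rmorph_nat (real_complex R)) sqmod_real.
have := del_le m Sm; have := s_min k; have := s_min l; lra.
Qed.

Hypothesis H_complete : complete_for H ip.

Lemma cauchy_sqnorm_cvg (u : nat -> Fn) : (forall k, H (u k)) ->
  (forall e : R, 0 < e -> exists N0, forall k l, (N0 <= k)%N -> (N0 <= l)%N ->
     sqnorm (fsub (u k) (u l)) < e) ->
  exists g, H g /\ null_seq (fun k => sqnorm (fsub (u k) g)).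
Proof.
move=> Hu u_cauchy.
have [g [Hg g_lim]] : exists g, H g /\ forall e : C, 0 < e -> exists N0, forall k,
    (N0 <= k)%N -> hnorm ip (fsub (u k) g) < e.
  apply: H_complete => // e e_gt0.
  have Ree_gt0 : 0 < complex.Re e ^+ 2.
    by move: e_gt0; rewrite ltcE => /andP[_ ?]; rewrite exprn_gt0.
  have [N0 N0_lt] := u_cauchy _ Ree_gt0.
  by exists N0 => k l kN lN; rewrite hnorm_ltE ?N0_lt //; apply: memB.
exists g; split => // e e_gt0.
have sqrt_gt0 : 0 < (Num.sqrt e)%:C by rewrite ltcR sqrtr_gt0.
have [N0 N0_lt] := g_lim _ sqrt_gt0.
exists N0 => k kN; have := N0_lt k kN; rewrite hnorm_ltE //; last exact: memB.
by rewrite /= sqr_sqrtr // ltW.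
Qed.

Lemma exists_orthogonal_projection (S : set Fn) f : subspace S -> H f ->
  exists g (s : nat -> Fn), [/\ H g, forall k, S (s k),
    null_seq (fun k => sqnorm (fsub (s k) g)) & forall w, S w -> ip (fsub f g) w = 0].
Proof.
move=> S_sub Hf; have [[_ SD _] SH] := S_sub.
have [del [s [_ del_le Ss s_min]]] := exists_minimizing_seq S_sub Hf.
have Hs k : H (s k) by apply: SH.
have s_cauchy := minimizing_seq_cauchy S_sub Hf del_le Ss s_min.
have [g [Hg s_cvg]] : exists g, H g /\ null_seq (fun k => sqnorm (fsub (s k) g)).
  apply: cauchy_sqnorm_cvg => // e e_gt0.
  have [N0 N0_lt] := inv_succ_lt (divr_gt0 e_gt0 (ltr0n _ 4)).
  exists N0 => k l kN lN; apply: le_lt_trans (s_cauchy k l) _.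
  by have := N0_lt k kN; have := N0_lt l lN; lra.
exists g, s; split => //.
apply: minimizer_orthogonal => //; first exact: memB.
move=> w Sw; have Hw := SH w Sw.
apply: le_trans (sqnorm_sub_lim_le Hf Hg Hs s_cvg s_min) _.
have -> : fsub (fsub f g) w = fsub f (fun z => g z + w z).
  by apply/funext => z; rewrite /fsub opprD addrA.
apply: (sqnorm_sub_lim_ge (s := fun k z => s k z + w z)) => //.
- exact: memD.
- by move=> k; apply: memD.
- have eq_sub k : fsub (fun z => s k z + w z) (fun z => g z + w z) = fsub (s k) g.
    by apply/funext => z; rewrite /fsub opprD addrACA subrr addr0.
  by move=> e /s_cvg [N0 N0_lt]; exists N0 => k kN; rewrite eq_sub N0_lt.
- by move=> k; apply/del_le/SD.
Qed.

Lemma dense_of_orthogonal_eq0 (S : set Fn) : subspace S ->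
  (forall y, H y -> (forall w, S w -> ip w y = 0) -> y = (fun _ => 0)) -> dense_in S.
Proof.
move=> S_sub S_perp f Hf; have [_ SH] := S_sub.
have [g [s [Hg Ss s_cvg fg_perp]]] := exists_orthogonal_projection S_sub Hf.
have Hfg := memB Hf Hg.
have -> : f = g.
  by apply/fsub_eq0/S_perp => // w Sw; rewrite (ipC Hfg) ?fg_perp ?conjc0 //; apply: SH.
move=> e /s_cvg [N0 N0_lt]; exists (s N0); split => //.
by rewrite sqnorm_subC ?N0_lt //; apply: SH.
Qed.


Lemma dense_seq (D : set Fn) f : D `<=` H -> dense_in D -> H f ->
  exists s : nat -> Fn, (forall k, D (s k)) /\ null_seq (fun k => sqnorm (fsub (s k) f)).
Proof.
move=> DH D_dense Hf; have [s s_near] := choice (fun k => D_dense f Hf _ (inv_succ_gt0 R k)).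
have Ds k : D (s k) by case: (s_near k).
exists s; split=> // e /inv_succ_lt [N0 N0_lt]; exists N0 => k kN.
rewrite sqnorm_subC //; last exact/DH/Ds.
case: (s_near k) => _ lt_k.
by apply: lt_trans lt_k (N0_lt k kN).
Qed.

Lemma cvg_cauchy (s : nat -> Fn) f : (forall k, H (s k)) -> H f ->
  null_seq (fun k => sqnorm (fsub (s k) f)) ->
  forall e : R, 0 < e -> exists N0, forall k l, (N0 <= k)%N -> (N0 <= l)%N ->
    sqnorm (fsub (s k) (s l)) < e.
Proof.
move=> Hs Hf s_cvg e e_gt0; have [N0 N0_lt] := s_cvg _ (divr_gt0 e_gt0 (ltr0n _ 4)).
exists N0 => k l kN lN.
have := sqnorm_sub_le (Hs k) Hf (Hs l) ltr01; rewrite invr1 (sqnorm_subC Hf) //.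
by have := N0_lt k kN; have := N0_lt l lN; lra.
Qed.

Section AdjointOfUnitary.
Variables (G Gs : Fn -> Fn).
Hypotheses (G_unitary : unitary_op H ip G) (Gs_mem : forall f, H f -> H (Gs f))
  (G_adj : forall f g, H f -> H g -> ip (G f) g = ip f (Gs g)).

Lemma unitary_mem f : H f -> H (G f).
Proof. by case: G_unitary => G_mem *; apply: G_mem. Qed.

Lemma ip_unitary f g : H f -> H g -> ip (G f) (G g) = ip f g.
Proof. by case: G_unitary => _ _ _ G_iso _; apply: G_iso. Qed.

Lemma adjoint_unitaryK h : H h -> Gs (G h) = h.
Proof.
move=> Hh; apply: ip_inj_r => //; first exact/Gs_mem/unitary_mem.
by move=> x Hx; rewrite -G_adj ?ip_unitary //; apply: unitary_mem.
Qed.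

Lemma adjoint_unitaryKV f : H f -> G (Gs f) = f.
Proof.
case: G_unitary => _ _ _ _ G_onto Hf.
by have [h [Hh <-]] := G_onto f Hf; rewrite adjoint_unitaryK.
Qed.

Lemma ip_adjoint_unitary f g : H f -> H g -> ip (Gs f) (Gs g) = ip f g.
Proof. by move=> Hf Hg; rewrite -G_adj ?adjoint_unitaryKV //; apply: Gs_mem. Qed.

Lemma adjoint_unitaryD f g : H f -> H g ->
  Gs (fun z => f z + g z) = (fun z => Gs f z + Gs g z).
Proof.
move=> Hf Hg; have [Gf Gg] := (Gs_mem Hf, Gs_mem Hg).
apply: ip_inj_r; [exact/Gs_mem/memD | exact: memD | move=> x Hx].
by rewrite -G_adj ?ipDr ?G_adj //; [apply: unitary_mem | apply: memD].
Qed.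

Lemma adjoint_unitaryZ (a : C) f : H f -> Gs (fun z => a *: f z) = (fun z => a *: Gs f z).
Proof.
move=> Hf; have Gf := Gs_mem Hf.
apply: ip_inj_r; [exact/Gs_mem/memZ | exact: memZ | move=> x Hx].
by rewrite -G_adj ?ipZr ?G_adj //; [apply: unitary_mem | apply: memZ].
Qed.

End AdjointOfUnitary.

Lemma linear_sum (T : Fn -> Fn) :
  (forall f g, H f -> H g -> T (fun z => f z + g z) = (fun z => T f z + T g z)) ->
  (forall (a : C) f, H f -> T (fun z => a *: f z) = (fun z => a *: T f z)) ->
  forall (I : Type) (r : seq I) (a : I -> C) (x : I -> Fn), (forall i, H (x i)) ->
  H (fun z => \sum_(i <- r) a i *: x i z) /\
  T (fun z => \sum_(i <- r) a i *: x i z) = (fun z => \sum_(i <- r) a i *: T (x i) z).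
Proof.
move=> TD TZ I r a x Hx; elim: r => [|i r [IH_mem IH_eq]].
  have -> : (fun z => \sum_(i <- [::]) a i *: x i z) = (fun z => 0 *: (0 : 'cV[C]_n)).
    by apply/funext => z; rewrite big_nil scale0r.
  by rewrite TZ //; split; [apply: memZ | apply/funext => z; rewrite big_nil scale0r].
have -> : (fun z => \sum_(j <- i :: r) a j *: x j z)
        = (fun z => a i *: x i z + \sum_(j <- r) a j *: x j z).
  by apply/funext => z; rewrite big_cons.
split; first by apply: memD => //; apply: memZ.
by rewrite TD ?IH_eq ?TZ //; [apply/funext => z; rewrite big_cons | apply: memZ].
Qed.

(** * Reproducing kernels *)

Variables (Om : set 'rV[C]_d) (K : 'rV[C]_d -> 'rV[C]_d -> 'M[C]_n).

Definition kfun (w : 'rV[C]_d) (v : 'cV[C]_n) : Fn := ext0 Om (fun z => K z w *m v).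

Hypothesis H_supp : forall f, H f -> forall z, ~ Om z -> f z = 0.
Hypothesis kfun_rep : forall w v, Om w ->
  H (kfun w v) /\ forall f, H f -> ip f (kfun w v) = (adjM v *m f w) 0 0.

Lemma kfun_mem w v : Om w -> H (kfun w v).
Proof. by move=> Omw; case: (kfun_rep v Omw). Qed.

Lemma ip_kfun w v f : Om w -> H f -> ip f (kfun w v) = (adjM v *m f w) 0 0.
Proof. by move=> Omw; case: (kfun_rep v Omw) => _; apply. Qed.

Lemma kfunE w v z : Om z -> kfun w v z = K z w *m v.
Proof. exact: ext0_in. Qed.

Lemma ip_kfun_kfun w v w' v' : Om w -> Om w' ->
  ip (kfun w v) (kfun w' v') = (adjM v' *m K w' w *m v) 0 0.
Proof. by move=> Omw Omw'; rewrite ip_kfun ?kfunE ?mulmxA //; apply: kfun_mem. Qed.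

Lemma eq_ip_kfun f g : H f -> H g ->
  (forall w v, Om w -> ip f (kfun w v) = ip g (kfun w v)) -> f = g.
Proof.
move=> Hf Hg eq_fg; apply/funext => z.
have [Omz|Omz] := pselect (Om z); last by rewrite !H_supp.
by apply: eq_cV_forms => v; rewrite -!ip_kfun ?eq_fg.
Qed.

Inductive kernel_span : Fn -> Prop :=
| kspan0 : kernel_span (fun _ => 0)
| kspan_kfun w v : Om w -> kernel_span (kfun w v)
| kspanD f g : kernel_span f -> kernel_span g -> kernel_span (fun z => f z + g z)
| kspanZ (a : C) f : kernel_span f -> kernel_span (fun z => a *: f z).

Lemma kernel_span_mem : kernel_span `<=` H.
Proof.
move=> f; elim => [|w v Omw|f1 f2 _ H1 _ H2|a f1 _ H1].
- exact: mem0.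
- exact: kfun_mem.
- exact: memD.
- exact: memZ.
Qed.

Lemma kernel_spanB f g : kernel_span f -> kernel_span g -> kernel_span (fsub f g).
Proof. by move=> sf sg; rewrite fsubE; apply: kspanD => //; apply: kspanZ. Qed.

Lemma kernel_span_dense : dense_in kernel_span.
Proof.
apply: dense_of_orthogonal_eq0.
  by split; [split; [exact: kspan0 | exact: kspanD | exact: kspanZ] | exact: kernel_span_mem].
move=> y Hy y_perp; apply: eq_ip_kfun => // w v Omw.
have Hk := kfun_mem v Omw.
by rewrite (ipC Hk Hy) y_perp ?conjc0 ?ip0l //; apply: kspan_kfun.
Qed.

Hypothesis polyfun_dense : poly_dense Om H ip.
Hypothesis Om0 : Om 0.
Hypothesis K_normalized : forall z, Om z -> K z 0 = 1%:M.

Lemma polyfun_mem q : vec_polyfun q -> H (ext0 Om q).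
Proof. by case: polyfun_dense => mem _; apply: mem. Qed.

Lemma polyfun_dense_in : dense_in [set p | exists2 q, vec_polyfun q & p = ext0 Om q].
Proof.
move=> f Hf e e_gt0; case: polyfun_dense => _ dense.
have sqrt_gt0 : 0 < (Num.sqrt e)%:C by rewrite ltcR sqrtr_gt0.
have [q [pq lt_e]] := dense f Hf _ sqrt_gt0.
exists (ext0 Om q); split; first by exists q.
move: lt_e; rewrite hnorm_ltE //; last exact/memB/polyfun_mem.
by rewrite /= sqr_sqrtr // ltW.
Qed.

Lemma kfun0 v : kfun 0 v = ext0 Om (fun _ => v).
Proof.
apply/funext => z; have [Omz|Omz] := pselect (Om z); last by rewrite /kfun !ext0_out.
by rewrite kfunE // K_normalized // mul1mx ext0_in.
Qed.

Section JointEigenvector.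
Variables (g : Fn) (lam : 'rV[C]_d).
Hypotheses (Hg : H g) (Om_lam : Om lam)
  (g_eigen : forall j f, H f -> ip (Mop j f) g = lam 0 j * ip f g).

Lemma ip_eigen_coord_polyfun p v : coord_polyfun p ->
  ip (ext0 Om (fun z => p z *: v)) g = (adjM (g 0) *m (p lam *: v)) 0 0.
Proof.
move=> cp; elim: cp v => [c|p1 p2 cp1 IH1 cp2 IH2|j p1 cp1 IH] v.
- have Hk := kfun_mem (c *: v) Om0.
  by rewrite -kfun0 (ipC Hg Hk) ip_kfun // form_conj.
- rewrite (_ : (fun z => _) = (fun z => p1 z *: v + p2 z *: v)); last first.
    by apply/funext => z; rewrite scalerDl.
  rewrite ext0D ipDl ?IH1 ?IH2 ?scalerDl ?mulmxDr ?mxE //;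
    exact/polyfun_mem/vec_polyfunZ.
- have -> : ext0 Om (fun z => (z 0 j * p1 z) *: v) = Mop j (ext0 Om (fun z => p1 z *: v)).
    apply/funext => z; rewrite /Mop; have [Omz|Omz] := pselect (Om z).
      by rewrite !ext0_in // scalerA.
    by rewrite !ext0_out // scaler0.
  by rewrite g_eigen ?IH ?formZ ?mulrA //; apply/polyfun_mem/vec_polyfunZ.
Qed.

Lemma ip_eigen_polyfun q : vec_polyfun q -> ip (ext0 Om q) g = (adjM (g 0) *m q lam) 0 0.
Proof.
move=> pq; pose qs r z := \sum_(i <- r) q z i 0 *: (delta_mx i 0 : 'cV[C]_n).
have -> : q = qs (index_enum 'I_n) by apply/funext => z; rewrite [LHS]cV_sum_delta.
suff /(_ (index_enum 'I_n))[] :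
  forall r, H (ext0 Om (qs r)) /\ ip (ext0 Om (qs r)) g = (adjM (g 0) *m qs r lam) 0 0 by [].
elim => [|i r [Hqs IH]].
  have -> : qs [::] = fun _ => 0 by apply/funext => z; rewrite /qs big_nil.
  by rewrite ext0_cst0 ip0l ?mulmx0 ?mxE.
have -> : qs (i :: r) = fun z => q z i 0 *: delta_mx i 0 + qs r z.
  by apply/funext => z; rewrite /qs big_cons.
have Hqi := polyfun_mem (vec_polyfunZ (delta_mx i 0) (scalar_coord_polyfun (pq i))).
rewrite ext0D; split; first exact: memD.
by rewrite ipDl // ip_eigen_coord_polyfun ?IH ?mulmxDr ?mxE //; apply: scalar_coord_polyfun.
Qed.

Lemma eigen_kfun : g = kfun lam (g 0).
Proof.
have Hk := kfun_mem (g 0) Om_lam.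
apply/fsub_eq0/(orthogonal_dense_eq0 _ polyfun_dense_in).
- by move=> _ [q pq ->]; apply: polyfun_mem.
- exact: memB.
move=> _ [q pq ->]; have Hq := polyfun_mem pq.
by rewrite ipBr // ip_eigen_polyfun // ip_kfun // ext0_in // subrr.
Qed.

End JointEigenvector.

(** * The operators Gamma(k) *)

Definition Gamma (A : 'M[C]_d) (c : 'M[C]_n) : Fn -> Fn := fun f z => c *m f (z *m invmx A).

Definition quasi_invariant_by (A : 'M[C]_d) (c : 'M[C]_n) :=
  forall z w, Om z -> Om w -> K z w = c *m K (z *m invmx A) (w *m invmx A) *m adjM c.

Lemma GammaD A c f g : Gamma A c (fun z => f z + g z) = (fun z => Gamma A c f z + Gamma A c g z).
Proof. by apply/funext => z; rewrite /Gamma mulmxDr. Qed.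

Lemma GammaZ A c (a : C) f : Gamma A c (fun z => a *: f z) = (fun z => a *: Gamma A c f z).
Proof. by apply/funext => z; rewrite /Gamma scalemxAr. Qed.

Lemma Gamma0 A c : Gamma A c (fun _ => 0) = (fun _ => 0).
Proof. by apply/funext => z; rewrite /Gamma mulmx0. Qed.

Lemma GammaB A c f g : Gamma A c (fsub f g) = fsub (Gamma A c f) (Gamma A c g).
Proof. by apply/funext => z; rewrite /Gamma /fsub mulmxBr. Qed.

Lemma GammaK A c : A \in unitmx -> unitary_mx c ->
  cancel (Gamma A c) (Gamma (invmx A) (adjM c)).
Proof.
move=> unitA /unitary_mxV c_unitary f; apply/funext => z.
by rewrite /Gamma invmxK mulmxK // mulmxA c_unitary mul1mx.
Qed.

Lemma GammaKV A c : A \in unitmx -> unitary_mx c ->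
  cancel (Gamma (invmx A) (adjM c)) (Gamma A c).
Proof.
move=> unitA c_unitary f; apply/funext => z.
by rewrite /Gamma invmxK mulmxKV // mulmxA c_unitary mul1mx.
Qed.

Section GammaIsometry.
Variables (A : 'M[C]_d) (c : 'M[C]_n).
Hypotheses (linA : linAut Om A) (c_unitary : unitary_mx c) (c_qinv : quasi_invariant_by A c).
Local Notation G := (Gamma A c).

Lemma Gamma_kfun w v : Om w -> G (kfun w v) = kfun (w *m A) (c *m v).
Proof.
move=> Omw; have unitA := linAut_unit linA.
apply/funext => z; rewrite /Gamma; have [Omz|Omz] := pselect (Om z).
  have OmzA := linAut_mulmx_inv linA Omz.
  rewrite !kfunE // (c_qinv Omz (linAut_mulmx linA Omw)) mulmxK //.
  by rewrite -!mulmxA (mulmxA (adjM c)) unitary_mxV // mul1mx.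
by rewrite /kfun !ext0_out ?mulmx0 //; apply: linAut_notin_inv.
Qed.

Lemma kernel_span_Gamma f : kernel_span f -> kernel_span (G f).
Proof.
elim => [|w v Omw|f1 f2 _ s1 _ s2|a f1 _ s1].
- by rewrite Gamma0; apply: kspan0.
- by rewrite Gamma_kfun //; apply: kspan_kfun; apply: linAut_mulmx.
- by rewrite GammaD; apply: kspanD.
- by rewrite GammaZ; apply: kspanZ.
Qed.

Lemma ip_Gamma_kfun f w v : H f -> H (G f) -> Om w -> ip (G f) (G (kfun w v)) = ip f (kfun w v).
Proof.
move=> Hf HGf Omw; rewrite Gamma_kfun // !ip_kfun //; last exact: linAut_mulmx.
by rewrite /Gamma mulmxK ?(linAut_unit linA) // form_mulmx mulmxA unitary_mxV // mul1mx.
Qed.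

Lemma ip_Gamma_span f g : H f -> H (G f) -> kernel_span g -> ip (G f) (G g) = ip f g.
Proof.
move=> Hf HGf span_g; have span_mem h : kernel_span h -> H h /\ H (G h).
  by move=> sh; split; apply: kernel_span_mem; last apply: kernel_span_Gamma.
elim: span_g => [|w v Omw|g1 g2 s1 IH1 s2 IH2|a g1 s1 IH1].
- by rewrite Gamma0 !ip0r.
- exact: ip_Gamma_kfun.
- have [[Hg1 HGg1] [Hg2 HGg2]] := (span_mem _ s1, span_mem _ s2).
  by rewrite GammaD !ipDr ?IH1 ?IH2.
- have [Hg1 HGg1] := span_mem _ s1.
  by rewrite GammaZ !ipZr ?IH1.
Qed.

Lemma sqnorm_Gamma_span f : kernel_span f -> sqnorm (G f) = sqnorm f.
Proof.
move=> sf; rewrite /sqnorm ip_Gamma_span //; first exact: kernel_span_mem.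
exact/kernel_span_mem/kernel_span_Gamma.
Qed.

(* [G] commutes with limits since convergence in [H] implies pointwise convergence *)
Lemma Gamma_lim f g (s : nat -> Fn) : H f -> H g -> (forall k, H (s k)) ->
  (forall k, H (G (s k))) -> null_seq (fun k => sqnorm (fsub (s k) f)) ->
  null_seq (fun k => sqnorm (fsub (G (s k)) g)) -> g = G f.
Proof.
move=> Hf Hg Hs HGs s_cvg Gs_cvg; apply/funext => z.
have [Omz|Omz] := pselect (Om z); last first.
  by rewrite H_supp // /Gamma H_supp ?mulmx0 //; apply: linAut_notin_inv.
have OmzA := linAut_mulmx_inv linA Omz.
apply: eq_cV_forms => v; rewrite -ip_kfun // /Gamma form_mulmx -ip_kfun //.
apply: (ip_lim _ _ _ _ HGs Hs) => //; try exact: kfun_mem.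
by move=> k; rewrite !ip_kfun // /Gamma form_mulmx.
Qed.

Lemma Gamma_approx f : H f -> H (G f) /\ exists s : nat -> Fn, [/\ forall k, kernel_span (s k),
  null_seq (fun k => sqnorm (fsub (s k) f)) & null_seq (fun k => sqnorm (fsub (G (s k)) (G f)))].
Proof.
move=> Hf; have [s [span_s s_cvg]] := dense_seq kernel_span_mem kernel_span_dense Hf.
have Hs k := kernel_span_mem (span_s k).
have HGs k := kernel_span_mem (kernel_span_Gamma (span_s k)).
have [g [Hg Gs_cvg]] : exists g, H g /\ null_seq (fun k => sqnorm (fsub (G (s k)) g)).
  apply: cauchy_sqnorm_cvg => // e /(cvg_cauchy Hs Hf s_cvg) [N0 N0_lt].
  by exists N0 => k l kN lN; rewrite -GammaB sqnorm_Gamma_span ?N0_lt //; apply: kernel_spanB.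
have gG := Gamma_lim Hf Hg Hs HGs s_cvg Gs_cvg.
by rewrite -gG; split => //; exists s.
Qed.

Lemma ip_Gamma f g : H f -> H g -> ip (G f) (G g) = ip f g.
Proof.
move=> Hf Hg; have [HGf _] := Gamma_approx Hf.
have [HGg [s [span_s s_cvg Gs_cvg]]] := Gamma_approx Hg.
have Hs k := kernel_span_mem (span_s k).
have HGs k := kernel_span_mem (kernel_span_Gamma (span_s k)).
rewrite (ipC HGg) // [RHS](ipC Hg) //; congr conjc.
apply: (ip_lim _ _ _ _ HGs Hs) => // k.
by rewrite (ipC HGf) // ip_Gamma_span // -ipC.
Qed.

End GammaIsometry.

Lemma quasi_invariant_by_inv A c : linAut Om A -> unitary_mx c ->
  quasi_invariant_by A c -> quasi_invariant_by (invmx A) (adjM c).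
Proof.
move=> linA c_unitary c_qinv z w Omz Omw; have unitA := linAut_unit linA.
rewrite invmxK adjMK (c_qinv _ _ (linAut_mulmx linA Omz) (linAut_mulmx linA Omw)) !mulmxK //.
by rewrite !mulmxA unitary_mxV // mul1mx -mulmxA unitary_mxV // mulmx1.
Qed.

Lemma Gamma_unitary A c : linAut Om A -> unitary_mx c ->
  quasi_invariant_by A c -> unitary_op H ip (Gamma A c).
Proof.
move=> linA c_unitary c_qinv; have unitA := linAut_unit linA.
have c'_qinv := quasi_invariant_by_inv linA c_unitary c_qinv.
have c'_unitary := unitary_mx_adj c_unitary.
split => [f Hf|f g _ _|a f _|f g|g Hg].
- by case: (Gamma_approx linA c_unitary c_qinv Hf).
- exact: GammaD.
- exact: GammaZ.
- exact: ip_Gamma.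
- exists (Gamma (invmx A) (adjM c) g); rewrite GammaKV //; split => //.
  by case: (Gamma_approx (linAut_inv linA) c'_unitary c'_qinv Hg).
Qed.

(** * Homogeneity and quasi-invariance *)

Lemma kM_eq (A : 'M[C]_d) j (f : Fn) z : kM A j f z = (z *m A) 0 j *: f z.
Proof.
rewrite /kM /Mop; under eq_bigr do rewrite scalerA.
by rewrite -scaler_suml mxE; congr (_ *: _); apply: eq_bigr => i _; rewrite mulrC.
Qed.

Lemma kfun_sum w v :
  kfun w v = (fun z => \sum_(j <- index_enum 'I_n) v j 0 *: kfun w (delta_mx j 0) z).
Proof.
apply/funext => z; have [Omz|Omz] := pselect (Om z); last first.
  by rewrite /kfun ext0_out // big1 // => j _; rewrite ext0_out // scaler0.
rewrite kfunE // {1}(cV_sum_delta v) mulmx_sumr; apply: eq_bigr => j _.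
by rewrite kfunE // scalemxAr.
Qed.

Hypothesis M_bdd : M_bounded H ip.

Lemma Mop_mem j f : H f -> H (Mop j f).
Proof. by case: (M_bdd j) => mem _; apply: mem. Qed.

Section HomogeneityMultiplier.
Variables (A : 'M[C]_d) (G Gs : Fn -> Fn).
Hypotheses (linA : linAut Om A) (G_unitary : unitary_op H ip G)
  (Gs_mem : forall f, H f -> H (Gs f))
  (G_adj : forall f g, H f -> H g -> ip (G f) g = ip f (Gs g))
  (G_intertwines : forall j f, H f -> G (kM A j (Gs f)) = Mop j f).
Local Notation B := (invmx A).

Lemma unitary_Mop l h : H h -> G (Mop l h) = (fun z => (z *m B) 0 l *: G h z).
Proof.
move=> Hh; have [_ GD GZ _ _] := G_unitary.
have kM_mem j : H (kM A j h).
  exact: (linear_sum GD GZ (index_enum 'I_d) (A^~ j) (fun i => Mop_mem i Hh)).1.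
(* [z_l = sum_j B j l (z A)_j] *)
have -> : Mop l h = (fun z => \sum_(j <- index_enum 'I_d) B j l *: kM A j h z).
  apply/funext => z; under eq_bigr do rewrite kM_eq scalerA.
  rewrite /Mop -scaler_suml; congr (_ *: _).
  rewrite -{1}(mulmxK (linAut_unit linA) z) mxE.
  by apply: eq_bigr => j _; rewrite mulrC.
rewrite (linear_sum GD GZ (index_enum 'I_d) (fun j => B j l) kM_mem).2.
apply/funext => z; rewrite mxE scaler_suml; apply: eq_bigr => j _.
rewrite -{1}(adjoint_unitaryK G_unitary Gs_mem G_adj Hh) G_intertwines.
  by rewrite /Mop scalerA mulrC.
exact: (unitary_mem G_unitary Hh).
Qed.

Lemma adjoint_kfun_eigen w v : Om w ->
  Gs (kfun w v) = kfun (w *m B) (Gs (kfun w v) 0).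
Proof.
move=> Omw; have Hk := kfun_mem v Omw.
apply: eigen_kfun; [exact: Gs_mem | exact: linAut_mulmx_inv | move=> j f Hf].
have HGf := unitary_mem G_unitary Hf.
have := unitary_mem G_unitary (Mop_mem j Hf); rewrite unitary_Mop // => HGMf.
rewrite -!G_adj ?unitary_Mop //; last exact: Mop_mem.
by rewrite !ip_kfun // formZ.
Qed.

Definition adjoint_kfun_mx (w : 'rV[C]_d) : 'M[C]_n :=
  \matrix_(i < n, j < n) Gs (kfun w (delta_mx j 0)) 0 i 0.

Lemma adjoint_kfun w v : Om w -> Gs (kfun w v) = kfun (w *m B) (adjoint_kfun_mx w *m v).
Proof.
move=> Omw; rewrite adjoint_kfun_eigen //; congr kfun.
have GsD := adjoint_unitaryD G_unitary Gs_mem G_adj.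
have GsZ := adjoint_unitaryZ G_unitary Gs_mem G_adj.
rewrite kfun_sum (linear_sum GsD GsZ _ _ (fun j => kfun_mem _ Omw)).2.
apply/matrixP => i k; rewrite (ord1 k) summxE !mxE; apply: eq_bigr => j _.
by rewrite !mxE mulrC.
Qed.

Lemma kernel_cocycle z w : Om z -> Om w ->
  K z w = adjM (adjoint_kfun_mx z) *m K (z *m B) (w *m B) *m adjoint_kfun_mx w.
Proof.
move=> Omz Omw; apply: eq_mx_forms => v v'.
have [OmzB OmwB] := (linAut_mulmx_inv linA Omz, linAut_mulmx_inv linA Omw).
rewrite -ip_kfun_kfun // -(ip_adjoint_unitary G_unitary Gs_mem G_adj); try exact: kfun_mem.
by rewrite !adjoint_kfun // ip_kfun_kfun // adjM_mul !mulmxA.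
Qed.

End HomogeneityMultiplier.

Lemma normalized_cocycle (B : 'M[C]_d) (Phi : 'rV[C]_d -> 'M[C]_n) :
  (forall z, Om z -> Om (z *m B)) ->
  (forall z w, Om z -> Om w -> K z w = adjM (Phi z) *m K (z *m B) (w *m B) *m Phi w) ->
  unitary_mx (adjM (Phi 0)) /\ forall z, Om z -> Phi z = Phi 0.
Proof.
move=> OmB cocycle.
have Phi0V : adjM (Phi 0) *m Phi 0 = 1%:M.
  have := cocycle 0 0 Om0 Om0.
  by rewrite mul0mx !K_normalized // mulmx1 => <-.
split; first by rewrite /unitary_mx adjMK.
move=> z Omz; rewrite -[LHS]adjMK -[RHS]adjMK; congr adjM.
have := cocycle z 0 Omz Om0; have OmzB := OmB z Omz.
rewrite mul0mx !K_normalized // mulmx1 => Phiz.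
by rewrite -[LHS]mulmx1 -(mulmx1C Phi0V) mulmxA -Phiz mul1mx.
Qed.

Lemma homogeneous_multiplier A : K_homogeneous Om H ip -> linAut Om A ->
  exists c, unitary_mx c /\ quasi_invariant_by A c.
Proof.
move=> homog linA; have [G [Gs [G_unitary [Gs_mem [G_adj G_int]]]]] := homog A linA.
have [Phi0_unitary Phi_const] := normalized_cocycle (linAut_mulmx_inv linA)
  (kernel_cocycle linA G_unitary Gs_mem G_adj G_int).
exists (adjM (adjoint_kfun_mx Gs 0)); split => // z w Omz Omw.
by rewrite (kernel_cocycle linA G_unitary Gs_mem G_adj G_int) // !Phi_const // adjMK.
Qed.

Definition constant_multiplier_quasi_invariance :=
  exists c : 'M[C]_d -> 'rV[C]_d -> 'M[C]_n,
    (forall A, linAut Om A -> forall z, Om z -> unitary_mx (c A z)) /\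
    (forall A, linAut Om A -> forall z z', Om z -> Om z' -> c A z = c A z') /\
    quasi_invariant Om K c.

Definition unitary_Gamma_family :=
  exists c : 'M[C]_d -> 'M[C]_n,
    forall A, linAut Om A -> unitary_mx (c A) /\ unitary_op H ip (Gamma A (c A)).

Lemma homogeneous_quasi_invariance :
  K_homogeneous Om H ip -> constant_multiplier_quasi_invariance.
Proof.
move=> homog.
have c_ex A : exists c, linAut Om A -> unitary_mx c /\ quasi_invariant_by A c.
  have [linA|] := pselect (linAut Om A); last by exists 0.
  by have [c ?] := homogeneous_multiplier homog linA; exists c.
have [c c_spec] := choice c_ex.
exists (fun A _ => c A); split; first by move=> A /c_spec[].
by split => // A /c_spec[].
Qed.

Lemma quasi_invariance_Gamma_unitary :
  constant_multiplier_quasi_invariance -> unitary_Gamma_family.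
Proof.
move=> [c [c_unitary [c_const c_qinv]]]; exists (fun A => c A 0) => A linA.
split; first exact: c_unitary.
apply: Gamma_unitary => // [|z w Omz Omw]; first exact: c_unitary.
by rewrite (c_qinv A linA z w Omz Omw) (c_const A linA z 0) // (c_const A linA w 0).
Qed.

Lemma unitary_Gamma_quasi_invariant A c : linAut Om A ->
  unitary_op H ip (Gamma A c) -> quasi_invariant_by A c.
Proof.
move=> linA [HG _ _ G_iso G_onto] z w Omz Omw.
have [OmzB OmwB] := (linAut_mulmx_inv linA Omz, linAut_mulmx_inv linA Omw).
apply: eq_mx_forms => v v'; rewrite -!mulmxA; congr ((_ *m _) 0 0).
have [f [Hf Gf]] := G_onto _ (kfun_mem v Omw).
have f_eq : f = kfun (w *m invmx A) (adjM c *m v).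
  apply: ip_inj_r => //; first exact: kfun_mem.
  move=> x Hx; rewrite -G_iso // Gf (ip_kfun v Omw (HG x Hx)) ip_kfun //.
  by rewrite /Gamma form_mulmx.
have := congr1 (fun F => F z) Gf.
by rewrite f_eq /Gamma !kfunE // => <-.
Qed.

Lemma Gamma_unitary_quasi_invariance :
  unitary_Gamma_family -> constant_multiplier_quasi_invariance.
Proof.
move=> [c c_spec]; exists (fun A _ => c A); split; first by move=> A /c_spec[].
split=> // A linA z w Omz Omw; have [_ G_unitary] := c_spec A linA.
exact: unitary_Gamma_quasi_invariant.
Qed.

Lemma unitary_Gamma_homogeneous : unitary_Gamma_family -> K_homogeneous Om H ip.
Proof.
move=> [c c_spec] A linA; have [c_unitary G_unitary] := c_spec A linA.
have unitA := linAut_unit linA.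
have [_ _ _ G_iso G_onto] := G_unitary.
exists (Gamma A (c A)), (Gamma (invmx A) (adjM (c A))); split => //.
have Gs_mem f : H f -> H (Gamma (invmx A) (adjM (c A)) f).
  by move=> Hf; have [h [Hh <-]] := G_onto f Hf; rewrite GammaK.
split=> //; split=> [f g Hf Hg|j f Hf].
  by have [h [Hh <-]] := G_onto g Hg; rewrite GammaK // G_iso.
apply/funext => z; rewrite /Gamma kM_eq mulmxKV // invmxK mulmxKV //.
by rewrite -scalemxAr mulmxA c_unitary mul1mx.
Qed.

End FunctionHilbertSpace.

Lemma is_RKHS_split (R : realType) d n (Om : set 'rV[R[i]]_d)
  (H : set ('rV[R[i]]_d -> 'cV[R[i]]_n)) ip (K : 'rV[R[i]]_d -> 'rV[R[i]]_d -> 'M[R[i]]_n) :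
  is_RKHS Om H ip K ->
  [/\ lin_closed H, inner_product_on H ip, complete_for H ip,
      forall f, H f -> forall z, ~ Om z -> f z = 0 &
      forall w v, Om w -> H (kfun Om K w v) /\
        forall f, H f -> ip f (kfun Om K w v) = (adjM v *m f w) 0 0].
Proof. by case=> H_lin H_fun ip_inner H_complete K_rep; split => // f /H_fun[]. Qed.

Theorem lemma2p2 (R : realType) (d n : nat) (Omega : set 'rV[R[i]]_d)
  (H : set ('rV[R[i]]_d -> 'cV[R[i]]_n))
  (ip : ('rV[R[i]]_d -> 'cV[R[i]]_n) -> ('rV[R[i]]_d -> 'cV[R[i]]_n) -> R[i])
  (K : 'rV[R[i]]_d -> 'rV[R[i]]_d -> 'M[R[i]]_n) :
  irreducible_BSD Omega ->
  circular_at_0 Omega ->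
  is_RKHS Omega H ip K ->
  poly_dense Omega H ip ->
  M_bounded H ip ->
  (forall z, Omega z -> K z 0 = 1%:M) ->
  [/\ (* (1) <-> (2) *)
      K_homogeneous Omega H ip <->
      (exists c : 'M[R[i]]_d -> 'rV[R[i]]_d -> 'M[R[i]]_n,
         (forall A, linAut Omega A -> forall z, Omega z -> unitary_mx (c A z)) /\
         (forall A, linAut Omega A -> forall z z', Omega z -> Omega z' ->
            c A z = c A z') /\
         quasi_invariant Omega K c)
    & (* (2) <-> (3) *)
      (exists c : 'M[R[i]]_d -> 'rV[R[i]]_d -> 'M[R[i]]_n,
         (forall A, linAut Omega A -> forall z, Omega z -> unitary_mx (c A z)) /\
         (forall A, linAut Omega A -> forall z z', Omega z -> Omega z' ->
            c A z = c A z') /\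
         quasi_invariant Omega K c) <->
      (exists c : 'M[R[i]]_d -> 'M[R[i]]_n,
         forall A, linAut Omega A ->
           unitary_mx (c A) /\
           unitary_op H ip (fun f z => c A *m f (z *m invmx A)))].
Proof.
move=> _ [Om0 _] RKHS polys M_bdd K_normalized.
have [H_lin ip_inner H_complete H_supp K_rep] := is_RKHS_split RKHS.
have to_Gamma := quasi_invariance_Gamma_unitary H_lin ip_inner H_complete H_supp K_rep Om0.
have of_Gamma := Gamma_unitary_quasi_invariance H_lin ip_inner K_rep.
split; split => [homog | qinv].
- exact: (homogeneous_quasi_invariance H_lin ip_inner K_rep polys Om0 K_normalized M_bdd homog).
- exact/unitary_Gamma_homogeneous/to_Gamma.
- exact: to_Gamma.
- exact: of_Gamma.
Qed.
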